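(* Let $X$ be a compact metric space and $f\colon X\to X$ a continuous map with finite topological entropy. Then for any $\Phi,\Psi\in C(X)^d$ satisfying condition (Q) and any $\xi\in C(X)$, the function $\alpha\mapsto\mathcal{S}(\alpha,\xi)$ is upper semi-continuous on $\mathbb{R}^d$ and continuous on the interior of $I(\Phi,\Psi)$.
   Context: $\mathcal{M}^f(X)$ is the set of $f$-invariant Borel probability measures; $P(\phi)$ the topological pressure on $X$. $\Phi=(\varphi_1,\dots,\varphi_d)$, $\Psi=(\psi_1,\dots,\psi_d)$, $\alpha*\Psi=(\alpha_i\psi_i)_i$, $\langle q,\Xi\rangle=\sum_iq_i\xi_i$. $\mathcal{S}(\alpha,\xi)=\inf_{q\in\mathbb{R}^d}P(\langle q,\Phi-\alpha*\Psi\rangle+\xi)\in\mathbb{R}\cup\{-\infty\}$. $I(\Phi,\Psi)=\left\{\left(\frac{\int\varphi_1d\mu}{\int\psi_1d\mu},\dots,\frac{\int\varphi_dd\mu}{\int\psi_dd\mu}\right)\mid\mu\in\mathcal{M}^f(X)\right\}$. Condition (Q): $\int\psi_i\,d\mu\ge0$ for every $\mu\in\mathcal{M}^f(X)$ and $1\le i\le d$, with strict inequality whenever $\int\varphi_i\,d\mu=0$. *)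

From HB Require Import structures.
From mathcomp Require Import all_boot all_order all_algebra.
From mathcomp Require Import all_classical all_reals all_analysis.
Set Implicit Arguments. Unset Strict Implicit. Unset Printing Implicit Defensive.
Import Order.TTheory GRing.Theory Num.Theory.
Import numFieldNormedType.Exports.
Local Open Scope classical_set_scope.
Local Open Scope ring_scope.

(** Nonempty metric spaces (a distinguished point is needed by the
    measure-theory library, whose measurable types are pointed). *)
#[short(type="pointedMetricType")]
HB.structure Definition PointedMetric (K : numDomainType) :=
  { M of Metric K M & Pointed M }.

Section Dyn.
Context {R : realType} {X : pointedMetricType R}.

Definition borel := g_sigma_algebraType (@open X).

Definition invariant (f : X -> X) (mu : probability borel R) : Prop :=
  forall A : set borel, measurable A -> mu ((f : borel -> borel) @^-1` A) = mu A.

Definition integ (mu : probability borel R) (g : X -> R) : R :=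
  fine (\int[mu]_(x in [set: borel]) (g x)%:E)%E.

Definition bowen_dist (f : X -> X) (n : nat) (x y : X) : R :=
  \big[Order.max/0]_(k < n) mdist (iter k f x) (iter k f y).

Definition separated (f : X -> X) (n : nat) (eps : R) (E : seq X) : Prop :=
  uniq E /\ forall x y, x \in E -> y \in E -> x != y -> eps < bowen_dist f n x y.

Definition birkhoff (f : X -> X) (phi : X -> R) (n : nat) (x : X) : R :=
  \sum_(k < n) phi (iter k f x).

Definition pressure_n (f : X -> X) (phi : X -> R) (n : nat) (eps : R) : \bar R :=
  ereal_sup [set ((n%:R)^-1 * ln (\sum_(x <- E) expR (birkhoff f phi n x)))%:E
            | E in [set E | separated f n eps E /\ E != [::]]].

Definition pressure_eps (f : X -> X) (phi : X -> R) (eps : R) : \bar R :=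
  limn_esup (fun n => pressure_n f phi n eps).

(** Topological pressure P(phi) = lim_{eps -> 0} P(phi, eps); since
    P(phi, eps) is nonincreasing in eps this limit is the supremum over eps > 0. *)
Definition pressure (f : X -> X) (phi : X -> R) : \bar R :=
  ereal_sup [set pressure_eps f phi eps | eps in [set eps : R | 0 < eps]].

Definition htop (f : X -> X) : \bar R := pressure f (fun _ => 0).

Context {d : nat}.

Definition Sfun (f : X -> X) (Phi Psi : 'I_d -> X -> R) (xi : X -> R)
    (alpha : 'rV[R]_d) : \bar R :=
  ereal_inf [set pressure f
      (fun x => \sum_(i < d) q ord0 i * (Phi i x - alpha ord0 i * Psi i x) + xi x)
    | q in [set: 'rV[R]_d]].

Definition Iset (f : X -> X) (Phi Psi : 'I_d -> X -> R) : set 'rV[R]_d :=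
  [set v | exists mu : probability borel R, invariant f mu /\
     forall i : 'I_d, integ mu (Psi i) != 0 /\
       v ord0 i = integ mu (Phi i) / integ mu (Psi i)].

Definition condQ (f : X -> X) (Phi Psi : 'I_d -> X -> R) : Prop :=
  forall mu : probability borel R, invariant f mu -> forall i : 'I_d,
    0 <= integ mu (Psi i) /\ (integ mu (Phi i) = 0 -> 0 < integ mu (Psi i)).

End Dyn.

Definition upper_semicontinuous {T : topologicalType} {R : numFieldType}
    (g : T -> \bar R) : Prop :=
  forall x (a : R), (g x < a%:E)%E -> exists2 V, nbhs x V & forall y, V y -> (g y < a%:E)%E.

From Pilot Require Import Defs.
From HB Require Import structures.
From mathcomp Require Import all_boot all_order all_algebra.
From mathcomp Require Import all_classical all_reals all_analysis.
From mathcomp Require Import measurable_realfun ring lra.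
Import Order.TTheory GRing.Theory Num.Theory.
Import numFieldNormedType.Exports.
Local Open Scope classical_set_scope.
Local Open Scope ring_scope.

(* For fixed [q], moving [alpha] by [eta] moves the potential
   [<q, Phi - alpha * Psi> + xi] by at most [eta * B * |q|_1] in sup norm
   ([B] bounds the [Psi_i]), and pressure is 1-Lipschitz for the sup norm;
   so [S(., xi)] is an infimum of continuous functions, hence upper
   semi-continuous.  At an interior point [alpha] of [I(Phi, Psi)], each corner
   [alpha + dl * (+-1, ..., +-1)] is realised by an invariant measure whose
   [int Psi_i] are positive by (Q); choosing the corner by the signs of [q], the
   easy half of the variational principle [P(phi) >= int phi dmu] yields the
   coercivity [P(<q, Phi - a' * Psi> + xi) >= kappa |q|_1 - |xi|_oo] uniformly
   for [a'] near [alpha].  Hence near [alpha] only bounded [q] matter, where the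
   Lipschitz estimate is uniform, giving lower semi-continuity; [h_top(f) < oo]
   (the case [q = 0]) makes [S(alpha, xi)] finite. *)

Section limn_esup_bounds.
Context {R : realType}.
Local Open Scope ereal_scope.

Lemma limn_esup_le_shift (u v : (\bar R)^nat) (c : R) :
  (forall n, (0 < n)%N -> u n <= v n + c%:E) -> limn_esup u <= limn_esup v + c%:E.
Proof.
move=> uv; rewrite !limn_esup_lim.
have esups_uv m : (0 < m)%N -> esups u m <= esups v m + c%:E.
  move=> m0; apply: ge_ereal_sup => _ [k /= mk <-].
  apply: le_trans (uv k (leq_trans m0 mk)) _; rewrite leeD2r //.
  by apply: ereal_sup_ubound; exists k.
have cv : esups v \+ cst c%:E @ \oo --> limn (esups v) + c%:E.
  by apply: cvgeD; [exact: fin_num_adde_defl|exact: is_cvg_esups|exact: cvg_cst].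
rewrite -(cvg_lim _ cv) //; apply: lee_lim.
- exact: is_cvg_esups.
- by apply/cvg_ex; eexists; exact: cv.
- by near=> m; apply: esups_uv; near: m; exists 1%N.
Unshelve. all: by end_near. Qed.

Lemma limn_esup_ge (l : \bar R) (u : (\bar R)^nat) :
  (forall n, (0 < n)%N -> l <= u n) -> l <= limn_esup u.
Proof.
move=> lu; rewrite limn_esup_lim; apply: lime_ge; first exact: is_cvg_esups.
near=> m; apply: le_trans (lu m _) _; last by apply: ereal_sup_ubound; exists m => /=.
by near: m; exists 1%N.
Unshelve. all: by end_near. Qed.

End limn_esup_bounds.

Section pressure_bounds.
Context {R : realType} {X : pointedMetricType R} (f : X -> X).

Lemma sum_expR_gt0 (E : seq X) (g : X -> R) : E != [::] ->
  0 < \sum_(x <- E) expR (g x).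
Proof.
case: E => // a E _; rewrite big_cons.
by apply: ltr_pwDl; [exact: expR_gt0|apply: sumr_ge0 => i _; exact: expR_ge0].
Qed.

Lemma birkhoff_le_shift (phi psi : X -> R) c n x :
  (forall y, phi y <= psi y + c) ->
  birkhoff f phi n x <= birkhoff f psi n x + n%:R * c.
Proof.
move=> phi_psi; rewrite /birkhoff.
have -> : n%:R * c = \sum_(k < n) c by rewrite sumr_const card_ord mulr_natl.
by rewrite -big_split /=; apply: ler_sum => k _; exact: phi_psi.
Qed.

Lemma pressure_n_le_shift (phi psi : X -> R) c n eps : (0 < n)%N ->
  (forall x, phi x <= psi x + c) ->
  (pressure_n f phi n eps <= pressure_n f psi n eps + c%:E)%E.
Proof.
move=> n_gt0 phi_psi; apply: ge_ereal_sup => _ [E [sepE E0] <-].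
apply: (@le_trans _ _ ((n%:R^-1 * ln (\sum_(x <- E) expR (birkhoff f psi n x)) + c)%:E)).
  have n_gt0' : 0 < n%:R :> R by rewrite ltr0n.
  have Sphi_gt0 := @sum_expR_gt0 E (birkhoff f phi n) E0.
  have Spsi_gt0 := @sum_expR_gt0 E (birkhoff f psi n) E0.
  have Sphi_le : \sum_(x <- E) expR (birkhoff f phi n x) <=
                 expR (n%:R * c) * \sum_(x <- E) expR (birkhoff f psi n x).
    rewrite mulr_sumr; apply: ler_sum => x _.
    by rewrite -expRD ler_expR addrC; exact: birkhoff_le_shift.
  rewrite lee_fin -(ler_pM2l n_gt0') mulrDr !mulrA mulfV ?gt_eqF // !mul1r addrC.
  rewrite -(ler_ln Sphi_gt0) ?posrE ?mulr_gt0 ?expR_gt0 // in Sphi_le.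
  by rewrite lnM ?posrE ?expR_gt0 // expRK in Sphi_le.
by rewrite EFinD leeD2r //; apply: ereal_sup_ubound; exists E.
Qed.

Lemma pressure_le_shift (phi psi : X -> R) c : (forall x, phi x <= psi x + c) ->
  (pressure f phi <= pressure f psi + c%:E)%E.
Proof.
move=> phi_psi; apply: ge_ereal_sup => _ [eps eps_gt0 <-].
apply: (@le_trans _ _ (pressure_eps f psi eps + c%:E)%E).
  by apply: limn_esup_le_shift => n n_gt0; exact: pressure_n_le_shift.
by rewrite leeD2r //; apply: ereal_sup_ubound; exists eps.
Qed.

(* A single point is an (n, eps)-separated set. *)
Lemma pressure_n_ge_birkhoff (phi : X -> R) n eps x : (0 < n)%N ->
  ((n%:R^-1 * birkhoff f phi n x)%:E <= pressure_n f phi n eps)%E.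
Proof.
move=> n_gt0; apply: ereal_sup_ubound; exists [:: x].
  by do 2!split => //; move=> a b; rewrite !inE => /eqP -> /eqP ->; rewrite eqxx.
by rewrite big_seq1 expRK.
Qed.

Lemma pressure_ge_birkhoff (phi : X -> R) (l : R) :
  (forall n, (0 < n)%N -> exists x, l <= n%:R^-1 * birkhoff f phi n x) ->
  (l%:E <= pressure f phi)%E.
Proof.
move=> lS; apply: (@le_trans _ _ (pressure_eps f phi 1)).
  apply: limn_esup_ge => n n_gt0; have [x lSx] := lS n n_gt0.
  by apply: le_trans (pressure_n_ge_birkhoff phi n 1 x n_gt0); rewrite lee_fin.
by apply: ereal_sup_ubound; exists 1 => //=.
Qed.

End pressure_bounds.

Section integ_bounded_measurable.
Context {R : realType} {X : pointedMetricType R}.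
Local Notation borelX := (@borel R X).

Definition bounded_measurable (g : X -> R) : Prop :=
  measurable_fun [set: borelX] (g : borelX -> R) /\ exists M, forall x, `|g x| <= M.

Lemma continuous_borel_measurable (g : X -> R) : continuous g ->
  measurable_fun [set: borelX] (g : borelX -> R).
Proof.
move=> /continuousP g_cont; apply: (measurability _ (RGenOpens.measurableE R)).
move=> _ [_ [a [b ->] <-]]; rewrite setTI; apply: sub_sigma_algebra.
exact/g_cont/interval_open.
Qed.

Lemma continuous_compact_bounded (g : X -> R) : compact [set: X] -> continuous g ->
  exists M, forall x, `|g x| <= M.
Proof.
move=> X_compact g_cont.
have /ex_strict_bound_gt0[k _ /= gk] : bounded_set (g @` [set: X]).
  by apply/compact_bounded/continuous_compact => //; exact: continuous_subspaceT.
by exists k => x; apply/ltW/gk; exists x.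
Qed.

Lemma continuous_bounded_measurable (g : X -> R) : compact [set: X] -> continuous g ->
  bounded_measurable g.
Proof.
by move=> ? ?; split; [exact: continuous_borel_measurable|exact: continuous_compact_bounded].
Qed.

Lemma bounded_measurable_cst c : bounded_measurable (fun _ => c).
Proof. by split; [exact: measurable_cst|exists `|c|]. Qed.

Lemma bounded_measurableD g h : bounded_measurable g -> bounded_measurable h ->
  bounded_measurable (fun x => g x + h x).
Proof.
move=> [mg [M gM]] [mh [N hN]]; split; first exact: measurable_funD.
by exists (M + N) => x; apply: le_trans (ler_normD _ _) _; exact: lerD.
Qed.

Lemma bounded_measurableB g h : bounded_measurable g -> bounded_measurable h ->
  bounded_measurable (fun x => g x - h x).
Proof.
move=> [mg [M gM]] [mh [N hN]]; split; first exact: measurable_funB.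
by exists (M + N) => x; apply: le_trans (ler_normB _ _) _; exact: lerD.
Qed.

Lemma bounded_measurableZ c g : bounded_measurable g ->
  bounded_measurable (fun x => c * g x).
Proof.
move=> [mg [M gM]]; split; first by apply: measurable_funM => //; exact: measurable_cst.
by exists (`|c| * M) => x; rewrite normrM; apply: ler_wpM2l.
Qed.

Lemma bounded_measurable_sum (I : Type) (s : seq I) (F : I -> X -> R) :
  (forall i, bounded_measurable (F i)) ->
  bounded_measurable (fun x => \sum_(i <- s) F i x).
Proof.
move=> FB; elim: s => [|a s IH].
  by under eq_fun do rewrite big_nil; exact: bounded_measurable_cst.
by under eq_fun do rewrite big_cons; exact: bounded_measurableD.
Qed.

Variable mu : probability borelX R.

Lemma integral_cst_probability c : (\int[mu]_(x in [set: borelX]) c)%E = c.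
Proof. by rewrite integral_cst //= probability_setT mule1. Qed.

Lemma bounded_measurable_integrable g : bounded_measurable g ->
  mu.-integrable [set: borelX] (EFin \o (g : borelX -> R)).
Proof.
move=> [mg [M gM]]; apply/integrableP; split; first exact/measurable_EFinP.
apply: (@le_lt_trans _ _ (\int[mu]_(x in [set: borelX]) M%:E)%E); last first.
  by rewrite integral_cst_probability ltry.
apply: ge0_le_integral => //.
- by apply/measurable_EFinP; exact: measurableT_comp.
- by move=> x _; rewrite lee_fin (le_trans _ (gM x)).
Qed.

Lemma integral_fin_num g : bounded_measurable g ->
  (\int[mu]_(x in [set: borelX]) (g x)%:E)%E \is a fin_num.
Proof. by move=> gB; apply: integrable_fin_num => //; exact: bounded_measurable_integrable. Qed.

Lemma integ_le g h : bounded_measurable g -> bounded_measurable h ->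
  (forall x, g x <= h x) -> integ mu g <= integ mu h.
Proof.
move=> gB hB gh; apply: fine_le; try exact: integral_fin_num.
apply: le_integral => //; try exact: bounded_measurable_integrable.
by move=> x _; rewrite lee_fin.
Qed.

Lemma integ_cst c : integ mu (fun _ => c) = c.
Proof. by rewrite /integ integral_cst_probability. Qed.

Lemma integD g h : bounded_measurable g -> bounded_measurable h ->
  integ mu (fun x => g x + h x) = integ mu g + integ mu h.
Proof.
move=> gB hB; rewrite /integ -fineD; try exact: integral_fin_num.
congr fine; under eq_integral do rewrite EFinD.
by apply: integralD => //; exact: bounded_measurable_integrable.
Qed.

Lemma integZ c g : bounded_measurable g -> integ mu (fun x => c * g x) = c * integ mu g.
Proof.
move=> gB; rewrite /integ; under eq_integral do rewrite EFinM.
rewrite integralZl //; last exact: bounded_measurable_integrable.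
by rewrite fineM // integral_fin_num.
Qed.

Lemma integB g h : bounded_measurable g -> bounded_measurable h ->
  integ mu (fun x => g x - h x) = integ mu g - integ mu h.
Proof.
move=> gB hB; have -> : (fun x => g x - h x) = (fun x => g x + (-1) * h x).
  by apply: funext => x; rewrite mulN1r.
by rewrite integD ?integZ ?mulN1r //; exact: bounded_measurableZ.
Qed.

Lemma integ_sum (I : Type) (s : seq I) (F : I -> X -> R) :
  (forall i, bounded_measurable (F i)) ->
  integ mu (fun x => \sum_(i <- s) F i x) = \sum_(i <- s) integ mu (F i).
Proof.
move=> FB; elim: s => [|a s IH].
  by under eq_fun do rewrite big_nil; rewrite big_nil integ_cst.
under eq_fun do rewrite big_cons.
by rewrite big_cons integD ?IH //; exact: bounded_measurable_sum.
Qed.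

End integ_bounded_measurable.

Section invariant_integral.
Context {R : realType} {X : pointedMetricType R} {f : X -> X}.
Hypothesis f_cont : continuous f.
Local Notation borelX := (@borel R X).

Lemma continuous_borel_measurable_map : measurable_fun [set: borelX] (f : borelX -> borelX).
Proof.
move: f_cont => /continuousP f_open.
apply: (@measurability _ _ borelX borelX setT f (@open X)) => //.
by move=> _ [A oA <-]; rewrite setTI; apply: sub_sigma_algebra; exact: f_open.
Qed.

Lemma bounded_measurable_comp g : bounded_measurable g ->
  bounded_measurable (fun x => g (f x)).
Proof.
move=> [mg [M gM]]; split; last by exists M.
exact: measurableT_comp mg continuous_borel_measurable_map.
Qed.

Lemma bounded_measurable_iter g k : bounded_measurable g ->
  bounded_measurable (fun x => g (iter k f x)).
Proof.
move=> gB; elim: k => [|k IH] //.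
under eq_fun do rewrite iterSr.
exact: (bounded_measurable_comp (fun y => g (iter k f y))).
Qed.

Lemma continuous_birkhoff (g : X -> R) n : continuous g -> continuous (birkhoff f g n).
Proof.
move=> g_cont; apply: continuous_big => [|k _]; first exact: add_continuous.
have iter_cont j : continuous (iter j f).
  by elim: j => [|j IH] x; [exact: cvg_id|exact: continuous_comp (IH x) (f_cont _)].
by move=> x; exact: continuous_comp (iter_cont k x) (g_cont _).
Qed.

Context {mu : probability borelX R}.
Hypothesis mu_inv : Defs.invariant f mu.

Lemma integ_comp_invariant g : bounded_measurable g ->
  integ mu (fun x => g (f x)) = integ mu g.
Proof.
move=> gB; have mf := continuous_borel_measurable_map.
have mg : measurable_fun [set: borelX] (EFin \o (g : borelX -> R)).
  by apply/measurable_EFinP; case: gB.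
have gf_int : mu.-integrable ((f : borelX -> borelX) @^-1` [set: borelX])
    ((EFin \o (g : borelX -> R)) \o f).
  by rewrite preimage_setT; apply: bounded_measurable_integrable; exact: bounded_measurable_comp.
have := @integral_pushforward _ _ borelX borelX R f mf mu setT _ mg gf_int measurableT.
rewrite (eq_measure_integral mu); last by move=> A mA _; exact: mu_inv.
by rewrite preimage_setT /integ => ->.
Qed.

Lemma integ_birkhoff g n : bounded_measurable g ->
  integ mu (birkhoff f g n) = n%:R * integ mu g.
Proof.
move=> gB.
have integ_iter k : integ mu (fun x => g (iter k f x)) = integ mu g.
  elim: k => [|k IH] //; rewrite -IH.
  rewrite -(integ_comp_invariant _ (bounded_measurable_iter _ k gB)).
  by congr integ; apply: funext => x; rewrite iterSr.
rewrite /birkhoff (@integ_sum _ _ mu _ _ (fun (k : 'I_n) x => g (iter k f x))); last first.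
  by move=> k; exact: bounded_measurable_iter.
by under eq_bigr do rewrite integ_iter; rewrite sumr_const card_ord mulr_natl.
Qed.

(* Easy half of the variational principle: the maximum of each Birkhoff
   average dominates its mean, which is the mean of the potential. *)
Lemma pressure_ge_integ (g : X -> R) : compact [set: X] -> continuous g ->
  ((integ mu g)%:E <= pressure f g)%E.
Proof.
move=> X_compact g_cont; apply: pressure_ge_birkhoff => n n_gt0.
have [x0 _ x0_max] := @compact_EVT_max _ _ (birkhoff f g n) [set: X]
  (ex_intro _ point I) X_compact (continuous_subspaceT (continuous_birkhoff _ n g_cont)).
exists x0.
have gB := continuous_bounded_measurable _ X_compact g_cont.
rewrite ler_pdivlMl ?ltr0n // -(integ_birkhoff _ n gB) -[leRHS](integ_cst mu).
apply: integ_le; last by move=> x; apply: x0_max; rewrite inE.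
  exact: continuous_bounded_measurable (continuous_birkhoff _ _ g_cont).
exact: bounded_measurable_cst.
Qed.

End invariant_integral.

Section real_facts.
Context {R : realType}.

Lemma fin_forall_ex_pos (T : finType) (P : T -> R -> Prop) :
  (forall t c c', 0 < c' <= c -> P t c -> P t c') ->
  (forall t, exists2 c, 0 < c & P t c) -> exists2 c, 0 < c & forall t, P t c.
Proof.
move=> P_anti P_ex.
suff [c c_gt0 Pc] : exists2 c, 0 < c & forall t, t \in enum T -> P t c.
  by exists c => // t; apply: Pc; rewrite mem_enum.
elim: (enum T) => [|a s [c c_gt0 Pc]]; first by exists 1.
have [ca ca_gt0 Pca] := P_ex a.
have m_gt0 : 0 < Num.min c ca by rewrite lt_min c_gt0.
exists (Num.min c ca) => // t; rewrite inE => /orP[/eqP ->|ts].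
  by apply: P_anti Pca; rewrite m_gt0 ge_min lexx orbT.
by apply: P_anti (Pc t ts); rewrite m_gt0 ge_min lexx.
Qed.

Lemma mul_signed_shift_ge (q alpha a' dl c p : R) : 0 < dl -> 0 < c <= p ->
  `|alpha - a'| <= dl / 2 ->
  dl / 2 * c * `|q| <= q * (alpha + (if 0 <= q then dl else - dl) - a') * p.
Proof.
move=> dl_gt0 /andP[c_gt0 cp]; rewrite ler_norml => /andP[lo hi].
rewrite mulrAC; apply: (ler_pM _ (ltW c_gt0) _ cp).
  by rewrite mulr_ge0 // divr_ge0 // ltW.
case: ifP => q_sign; first by rewrite ger0_norm //; nra.
by move/negbT: q_sign; rewrite -ltNge => q_lt0; rewrite ltr0_norm //; nra.
Qed.

Lemma lte_ex_pos_shift (P : \bar R) (a C : R) : 0 <= C -> (P < a%:E)%E ->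
  exists2 r, 0 < r & (P + (r * C)%:E < a%:E)%E.
Proof.
move=> C_ge0; case: P => [p Pa| //|_]; last by exists 1; rewrite ?ltr01 ?ltNyr.
rewrite lte_fin in Pa.
have r_gt0 : 0 < (a - p) / (C + 1) by apply: divr_gt0; lra.
exists ((a - p) / (C + 1)) => //; rewrite -EFinD lte_fin.
have rC : (a - p) / (C + 1) * (C + 1) = a - p by rewrite divfK //; lra.
nra.
Qed.

Lemma cvg_EFin_sandwich {T : Type} {F : set_system T} {FF : Filter F}
    (g : T -> \bar R) (s : R) :
  (forall e, 0 < e -> \forall y \near F, ((s - e)%:E <= g y < (s + e)%:E)%E) ->
  g @ F --> s%:E.
Proof.
move=> g_near; have fin_near (e : R) : 0 < e -> \forall y \near F, g y \is a fin_num.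
  move=> e_gt0; apply: filterS (g_near e e_gt0) => y /andP[lo hi].
  by apply/fin_numPlt; rewrite (lt_le_trans (ltNyr _) lo) (lt_trans hi (ltry _)).
apply/fine_cvgP; split; first exact: fin_near ltr01.
apply/cvgrPdist_lt => e e_gt0.
have e2_gt0 : 0 < e / 2 by rewrite divr_gt0.
apply: filterS2 (g_near _ e2_gt0) (fin_near _ e2_gt0) => y + gy_fin.
rewrite -(fineK gy_fin) !lte_fin lee_fin /= ltr_norml => /andP[lo hi].
by apply/andP; split; lra.
Qed.

End real_facts.

Section conditional_pressure.
Context {R : realType} {X : pointedMetricType R} (f : X -> X) (d : nat)
  (Phi Psi : 'I_d -> X -> R) (xi : X -> R).
Hypotheses (X_compact : compact [set: X]) (f_cont : continuous f)
  (Phi_cont : forall i, continuous (Phi i)) (Psi_cont : forall i, continuous (Psi i))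
  (xi_cont : continuous xi).

Definition potential (q a : 'rV[R]_d) (x : X) : R :=
  \sum_(i < d) q ord0 i * (Phi i x - a ord0 i * Psi i x) + xi x.

Definition l1norm (q : 'rV[R]_d) : R := \sum_(i < d) `|q ord0 i|.

Lemma l1norm_ge0 q : 0 <= l1norm q.
Proof. exact: sumr_ge0. Qed.

Lemma Sfun_le_pressure q a : (Sfun f Phi Psi xi a <= pressure f (potential q a))%E.
Proof. by apply: ereal_inf_lbound; exists q. Qed.

Lemma Psi_bounded : exists2 B : R, 0 < B & forall i x, `|Psi i x| <= B.
Proof.
have sum_cont : continuous (fun x => \sum_i `|Psi i x|).
  apply: continuous_big => [|i _ x]; first exact: add_continuous.
  exact: cvg_norm (Psi_cont i x).
have [M sumM] := continuous_compact_bounded _ X_compact sum_cont.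
exists (Num.max 1 M); first by rewrite lt_max ltr01.
move=> i x; rewrite le_max; apply/orP; right.
apply: le_trans (le_trans (ler_norm _) (sumM x)).
by rewrite (bigD1 i) //= lerDl sumr_ge0.
Qed.

Lemma potential_le_shift (q a a' : 'rV[R]_d) (eta B : R) :
  (forall i x, `|Psi i x| <= B) -> (forall i, `|a ord0 i - a' ord0 i| <= eta) ->
  forall x, potential q a' x <= potential q a x + eta * B * l1norm q.
Proof.
move=> PsiB aa' x; rewrite /potential addrAC lerD2r /l1norm mulr_sumr -big_split /=.
apply: ler_sum => i _.
have -> : q ord0 i * (Phi i x - a' ord0 i * Psi i x) =
  q ord0 i * (Phi i x - a ord0 i * Psi i x) + q ord0 i * (a ord0 i - a' ord0 i) * Psi i x.
  by ring.
rewrite lerD2l; apply: le_trans (ler_norm _) _.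
rewrite !normrM [X in _ <= X]mulrC -mulrA.
by apply: ler_wpM2l => //; apply: ler_pM.
Qed.

Lemma continuous_potential q a : continuous (potential q a).
Proof.
have term_cont i : continuous (fun y => q ord0 i * (Phi i y - a ord0 i * Psi i y)).
  move=> y; apply: cvgM; first exact: cvg_cst.
  by apply: cvgB; [exact: Phi_cont|apply: cvgM; [exact: cvg_cst|exact: Psi_cont]].
have sum_cont : continuous (fun y => \sum_(i < d) q ord0 i * (Phi i y - a ord0 i * Psi i y)).
  by apply: continuous_big => [|i _]; [exact: add_continuous|exact: term_cont].
by move=> x; exact: continuousD (sum_cont x) (xi_cont x).
Qed.

Lemma Sfun_usc : upper_semicontinuous (Sfun f Phi Psi xi).
Proof.
move=> a0 a /ereal_inf_lt[_ [q _ <-] Pq].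
have [B B_gt0 PsiB] := Psi_bounded.
have [r r_gt0 Pqr] := lte_ex_pos_shift _ _ _ (mulr_ge0 (ltW B_gt0) (l1norm_ge0 q)) Pq.
exists (ball a0 r); first exact: nbhsx_ballx.
move=> y [_ a0y]; apply: le_lt_trans (Sfun_le_pressure q y) _.
apply: le_lt_trans Pqr; rewrite mulrA; apply: pressure_le_shift.
by apply: potential_le_shift => // i; apply: ltW; have := a0y ord0 i.
Qed.

Lemma integ_potential (mu : probability borel R) q a : integ mu (potential q a) =
  \sum_(i < d) q ord0 i * (integ mu (Phi i) - a ord0 i * integ mu (Psi i)) + integ mu xi.
Proof.
have bm g : continuous g -> bounded_measurable g := continuous_bounded_measurable _ X_compact.
have term_bm i : bounded_measurable (fun x => Phi i x - a ord0 i * Psi i x).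
  by apply: bounded_measurableB; [|apply: bounded_measurableZ]; exact: bm.
rewrite /potential integD; first last.
- exact: bm.
- by apply: bounded_measurable_sum => i; exact: bounded_measurableZ.
rewrite (@integ_sum _ _ mu _ _ (fun i x => q ord0 i * (Phi i x - a ord0 i * Psi i x))); last first.
  by move=> i; exact: bounded_measurableZ.
congr (_ + _); apply: eq_bigr => i _.
rewrite integZ ?integB; [|exact: bm|by apply: bounded_measurableZ; exact: bm|exact: term_bm].
by rewrite integZ //; exact: bm.
Qed.

Hypothesis Q : condQ f Phi Psi.

Lemma interior_Iset_corner_measures alpha : interior (Iset f Phi Psi) alpha ->
  exists dl, exists2 c, 0 < dl /\ 0 < c & forall s : {ffun 'I_d -> bool},
    exists2 mu : probability borel R, Defs.invariant f mu & forall i,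
      c <= integ mu (Psi i) /\
      integ mu (Phi i) = (alpha ord0 i + (if s i then dl else - dl)) * integ mu (Psi i).
Proof.
move=> /nbhs_ballP[e /= e_gt0 ballI]; exists (e / 2).
pose corner (s : {ffun 'I_d -> bool}) (c : R) := exists2 mu : probability borel R,
  Defs.invariant f mu & forall i, c <= integ mu (Psi i) /\
  integ mu (Phi i) = (alpha ord0 i + (if s i then e / 2 else - (e / 2))) * integ mu (Psi i).
suff [c c_gt0 Pc] : exists2 c, 0 < c & forall s, corner s c.
  by exists c => //; split => //; exact: divr_gt0.
apply: fin_forall_ex_pos => [s c c' /andP[_ c'c] [mu mu_inv muPsi]|s].
  by exists mu => // i; have [cPsi ->] := muPsi i; split => //; exact: le_trans cPsi.
pose beta : 'rV[R]_d := \row_i (alpha ord0 i + (if s i then e / 2 else - (e / 2))).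
have [mu [mu_inv mu_beta]] : Iset f Phi Psi beta.
  apply: ballI; split => // i j; rewrite [i]ord1 /ball /= mxE opprD addrA subrr sub0r normrN.
  by case: (s j); rewrite ?normrN gtr0_norm; lra.
have [c c_gt0 Psi_ge] : exists2 c, 0 < c & forall i, c <= integ mu (Psi i).
  apply: fin_forall_ex_pos => [i c c' /andP[_ c'c] /(le_trans c'c) //|i].
  have [Psi_ge0 _] := Q _ mu_inv i; have [Psi_neq0 _] := mu_beta i.
  by exists (integ mu (Psi i)); rewrite // lt_neqAle eq_sym Psi_neq0.
exists c => //; exists mu => // i; split => //.
by have [Psi_neq0] := mu_beta i; rewrite mxE => ->; rewrite divfK.
Qed.

Lemma pressure_potential_coercive {Mx alpha} : (forall x, `|xi x| <= Mx) ->
  interior (Iset f Phi Psi) alpha ->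
  exists kap dl, [/\ 0 < kap, 0 < dl & forall q a' : 'rV[R]_d,
    (forall i, `|alpha ord0 i - a' ord0 i| <= dl) ->
    ((kap * l1norm q - Mx)%:E <= pressure f (potential q a'))%E].
Proof.
move=> xiM /interior_Iset_corner_measures[dl [c [dl_gt0 c_gt0] corner]].
exists (dl / 2 * c), (dl / 2); split; [by rewrite !mulr_gt0|by rewrite divr_gt0|].
move=> q a' a'_near.
have [mu mu_inv mu_corner] := corner [ffun i => 0 <= q ord0 i].
have := pressure_ge_integ f_cont mu_inv _ X_compact (continuous_potential q a').
apply: le_trans.
rewrite lee_fin integ_potential; apply: lerD.
  rewrite /l1norm mulr_sumr; apply: ler_sum => i _.
  have [c_Psi ->] := mu_corner i; rewrite ffunE -mulrBl mulrA.
  by apply: mul_signed_shift_ge; rewrite ?c_gt0.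
rewrite -[leLHS](integ_cst mu); apply: integ_le.
- exact: bounded_measurable_cst.
- exact: continuous_bounded_measurable.
- by move=> x; have := xiM x; rewrite ler_norml => /andP[].
Qed.

Lemma Sfun_fin_num alpha : (htop f < +oo)%E -> interior (Iset f Phi Psi) alpha ->
  Sfun f Phi Psi xi alpha \is a fin_num.
Proof.
move=> htop_fin alpha_int.
have [Mx xiM] := continuous_compact_bounded _ X_compact xi_cont.
have [kap [dl [kap_gt0 dl_gt0 coercive]]] := pressure_potential_coercive xiM alpha_int.
apply/fin_numPlt/andP; split.
  apply: (@lt_le_trans _ _ (- Mx)%:E); first exact: ltNyr.
  apply: le_ereal_inf_tmp => _ [q _ <-].
  apply: le_trans (coercive q alpha _); last by move=> i; rewrite subrr normr0 ltW.
  by have := l1norm_ge0 q; rewrite lee_fin; nra.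
apply: le_lt_trans (Sfun_le_pressure 0 alpha) _.
apply: (@le_lt_trans _ _ (htop f + Mx%:E)%E); last exact: lte_add_pinfty htop_fin (ltry _).
apply: pressure_le_shift => x; rewrite /potential big1 => [|i _]; last by rewrite mxE mul0r.
by have := xiM x; rewrite ler_norml => /andP[_ ?]; lra.
Qed.

Lemma Sfun_lower_near alpha s e : interior (Iset f Phi Psi) alpha ->
  Sfun f Phi Psi xi alpha = s%:E -> 0 < e ->
  \forall y \near alpha, ((s - e)%:E <= Sfun f Phi Psi xi y)%E.
Proof.
move=> alpha_int Salpha e_gt0.
have [Mx xiM] := continuous_compact_bounded _ X_compact xi_cont.
have Mx_ge0 : 0 <= Mx := le_trans (normr_ge0 _) (xiM point).
have [B B_gt0 PsiB] := Psi_bounded.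
have [kap [dl [kap_gt0 dl_gt0 coercive]]] := pressure_potential_coercive xiM alpha_int.
have den_gt0 : 0 < B * (`|s| + Mx + 1) by rewrite mulr_gt0 //; have := normr_ge0 s; lra.
(* [eta] keeps [y] in the coercivity ball, and [e < eta * B * l1norm q]
   then forces [kap * l1norm q > |s| + Mx + 1]. *)
pose eta := Num.min dl (kap * e / (B * (`|s| + Mx + 1))).
have eta_gt0 : 0 < eta by rewrite lt_min dl_gt0 /= divr_gt0 // mulr_gt0.
have eta_den : eta * (B * (`|s| + Mx + 1)) <= kap * e.
  by rewrite -ler_pdivlMr // ge_min lexx orbT.
apply: filterS (nbhsx_ballx alpha eta eta_gt0) => y [_ alpha_y].
have alpha_y_le i : `|alpha ord0 i - y ord0 i| <= eta.
  by apply: ltW; have := alpha_y ord0 i.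
apply: le_ereal_inf_tmp => _ [q _ <-].
have [small|large] := leP (eta * B * l1norm q) e.
  apply: (@le_trans _ _ (s - eta * B * l1norm q)%:E); first by rewrite lee_fin lerD2l lerN2.
  rewrite EFinB leeBlDr // -Salpha; apply: le_trans (Sfun_le_pressure q alpha) _.
  by apply: pressure_le_shift; apply: potential_le_shift => // i; rewrite distrC.
apply: le_trans (coercive q y _); last first.
  by move=> i; apply: le_trans (alpha_y_le i) _; rewrite ge_min lexx.
have : eta * B * (`|s| + Mx + 1) < eta * B * (kap * l1norm q).
  by have := l1norm_ge0 q; rewrite -mulrA; nra.
rewrite ltr_pM2l ?mulr_gt0 // lee_fin => large'.
by have := ler_norm s; lra.
Qed.

Lemma Sfun_continuous_interior alpha : (htop f < +oo)%E ->
  interior (Iset f Phi Psi) alpha -> {for alpha, continuous (Sfun f Phi Psi xi)}.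
Proof.
move=> htop_fin alpha_int.
have [s Salpha] : exists s, Sfun f Phi Psi xi alpha = s%:E.
  by exists (fine (Sfun f Phi Psi xi alpha)); rewrite fineK // Sfun_fin_num.
suff : Sfun f Phi Psi xi y @[y --> alpha] --> s%:E.
  by rewrite /prop_for /continuous_at Salpha.
apply: (cvg_EFin_sandwich (F := nbhs alpha)) => e e_gt0.
have Salpha_lt : (Sfun f Phi Psi xi alpha < (s + e)%:E)%E by rewrite Salpha lte_fin ltrDl.
have [V V_alpha V_lt] := Sfun_usc _ _ Salpha_lt.
apply: filterS2 (Sfun_lower_near _ _ _ alpha_int Salpha e_gt0) V_alpha => y lo /V_lt hi.
by rewrite lo hi.
Qed.

End conditional_pressure.

Theorem proposition2p4 (R : realType) (X : pointedMetricType R) (f : X -> X)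
    (d : nat) (Phi Psi : 'I_d -> X -> R) (xi : X -> R) :
  compact [set: X] ->
  continuous f ->
  (htop f < +oo)%E ->
  (forall i, continuous (Phi i)) ->
  (forall i, continuous (Psi i)) ->
  continuous xi ->
  condQ f Phi Psi ->
  upper_semicontinuous (Sfun f Phi Psi xi) /\
  (forall alpha : 'rV[R]_d, interior (Iset f Phi Psi) alpha ->
     {for alpha, continuous (Sfun f Phi Psi xi)}).
Proof.
move=> X_compact f_cont htop_fin Phi_cont Psi_cont xi_cont Q; split.
  exact: Sfun_usc.
by move=> alpha; exact: Sfun_continuous_interior.
Qed.
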